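(* Let $n\ge 0$ and put $\mathbb{C}[\epsilon]=\mathbb{C}[z]/(z^{n+1})$. Let $K=\mathbb{C}(s,x,t_0,u_{i,j}:0\le j\le i)$ with the derivation $\partial$ described in the context, and write $u_i=u_{i,i}$. Then in $K[\epsilon]=K\otimes\mathbb{C}[\epsilon]$: (a) $t_0-x+\epsilon=\Big(\sum_{k=0}^{n}\frac{1}{k!}\partial^k\big(\frac{t_0-x}{s-u_0}\big)\epsilon^k\Big)\Big(s-\sum_{k=0}^{n}u_k\epsilon^k\Big)$; (b) for every $0\le m\le n$, $\frac{1}{m!}\partial^m\big(\log(s-u_0)\big)=[\epsilon^m]\log\big(s-\sum_{k=0}^n u_k\epsilon^k\big)$.
   Context: $K$ is the field of rational functions over $\mathbb{C}$ in the independent variables $s,x,t_0$ and $u_{i,j}$ for integers $0\le j\le i$. The derivation $\partial:K\to K$ is the unique $\mathbb{C}$-linear derivation with $\partial s=\partial x=0$, $\partial t_0=1$ and $\partial u_{i,j}=(j+1)u_{i+1,j+1}$; one writes $u_i:=u_{i,i}$ (so $\partial u_i=(i+1)u_{i+1}$). In (b), for $m\ge1$, $\partial^m\log(s-u_0)$ means $\partial^{m-1}\big(\frac{-u_1}{s-u_0}\big)$ (the formal derivative of $\log(s-u_0)$ is $-\partial u_0/(s-u_0)$), and for $m\ge 1$, $[\epsilon^m]\log(s-\sum_k u_k\epsilon^k)$ denotes the coefficient of $\epsilon^m$ in the (finite, since $\epsilon$ is nilpotent) expansion of $\log\big(1-\sum_{k=1}^n\frac{u_k}{s-u_0}\epsilon^k\big)=-\sum_{r\ge1}\frac1r\big(\sum_{k=1}^n\frac{u_k}{s-u_0}\epsilon^k\big)^r$;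 for $m=0$ both sides are $\log(s-u_0)$. *)

From HB Require Import structures.
From mathcomp Require Import all_boot all_order all_algebra.
Set Implicit Arguments.
Unset Strict Implicit.
Unset Printing Implicit Defensive.
Import Order.TTheory GRing.Theory Num.Theory.
Local Open Scope ring_scope.

Definition is_derivation (K : fieldType) (D : K -> K) : Prop :=
  (forall a b, D (a + b) = D a + D b) /\
  (forall a b, D (a * b) = D a * b + a * D b).

(* K[eps] = K[z]/(z^(n+1)) is represented by {poly K} modulo 'X^(n+1);
   two polynomials are equal in K[eps] iff their remainders mod 'X^(n+1)
   agree. *)
Definition eqeps (K : fieldType) (n : nat) (p q : {poly K}) : Prop :=
  modp p ('X^(n.+1)) = modp q ('X^(n.+1)).

(* The polynomial  - sum_{r=1}^{n} (1/r) P^r  with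
   P = sum_{k=1}^{n} u_k/(s-u_0) eps^k : it represents
   log(1 - sum_{k=1}^n u_k/(s-u_0) eps^k) in K[eps] (terms with r > n
   vanish since P has no constant term and eps^(n+1) = 0). *)
Definition log1m_eps (K : fieldType) (n : nat) (s : K) (u : nat -> K)
  : {poly K} :=
  let P := \sum_(1 <= k < n.+1) (u k / (s - u 0%N)) *: 'X^k in
  - \sum_(1 <= r < n.+1) (r%:R)^-1 *: P ^+ r.

From HB Require Import structures.
From mathcomp Require Import all_boot all_order all_algebra.
Import Order.TTheory GRing.Theory Num.Theory.
Local Open Scope ring_scope.

(* The Taylor map  a |-> sum_k D^k a / k! eps^k  is a ring morphism K -> K[eps]
   in characteristic 0: both sides of the multiplicativity identity have the same
   constant term and, by the Leibniz rule, the same derivative in eps.  Part (a)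
   is the image of  t0 - x = ((t0 - x) / (s - u0)) * (s - u0),  since D maps
   t0 - x to 1 and D^k u0 = k! u_k.  For (b), let Q = 1 - P be the image of
   s - u0 divided by s - u0.  The derivative L' of L = log(1 - P) and the image
   of the logarithmic derivative D(s - u0) / (s - u0) = -u1 / (s - u0) both solve
   L' Q = Q' modulo eps^n; as Q(0) = 1, Q is a unit and they coincide. *)

Section Derivation.
Context {K : fieldType} {D : K -> K}.
Hypothesis hD : is_derivation D.

Lemma derivationD a b : D (a + b) = D a + D b. Proof. by case: hD. Qed.

Lemma derivationM a b : D (a * b) = D a * b + a * D b. Proof. by case: hD. Qed.

Lemma derivation0 : D 0 = 0.
Proof. by apply: (addrI (D 0)); rewrite -derivationD !addr0. Qed.

Lemma derivationN a : D (- a) = - D a.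
Proof. by apply/eqP; rewrite -addr_eq0 -derivationD addNr derivation0. Qed.

Lemma derivationB a b : D (a - b) = D a - D b.
Proof. by rewrite derivationD derivationN. Qed.

Lemma derivation1 : D 1 = 0.
Proof.
have := derivationM 1 1; rewrite !mulr1 mul1r => D1_twice.
by apply: (addrI (D 1)); rewrite addr0 -D1_twice.
Qed.

Lemma derivation_natr k : D k%:R = 0.
Proof.
by elim: k => [|k IH]; rewrite ?derivation0 // mulrS derivationD derivation1 IH addr0.
Qed.

Lemma derivation_natrM k a : D (k%:R * a) = k%:R * D a.
Proof. by rewrite derivationM derivation_natr mul0r add0r. Qed.

Lemma iter_derivation0 k : iter k D 0 = 0.
Proof. by elim: k => //= k ->; rewrite derivation0. Qed.

Lemma iter_derivationD k a b : iter k D (a + b) = iter k D a + iter k D b.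
Proof. by elim: k => //= k ->; rewrite derivationD. Qed.

Lemma iter_derivationB k a b : iter k D (a - b) = iter k D a - iter k D b.
Proof. by elim: k => //= k ->; rewrite derivationB. Qed.

End Derivation.

Section TruncatedPolynomials.
Context {K : fieldType}.
Implicit Types p q r : {poly K}.

Definition eqmodX N p q := p %% 'X^N = q %% 'X^N.

Lemma eqmodX_coefP N p q :
  eqmodX N p q <-> (forall j, (j < N)%N -> p`_j = q`_j).
Proof.
rewrite /eqmodX -!Pdiv.IdomainMonic.take_poly_modp; split=> [e j lt_jN | e].
  by have := congr1 (fun r => r`_j) e; rewrite /= !coef_take_poly lt_jN.
by apply/polyP => j; rewrite !coef_take_poly; case: ifP => // /e.
Qed.

Lemma modpM p q d : (p * q) %% d = ((p %% d) * (q %% d)) %% d.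
Proof. by rewrite modp_mul [in RHS]mulrC modp_mul mulrC. Qed.

Lemma eqmodX_mulr_cancel N p q r :
  r`_0 != 0 -> eqmodX N (p * r) (q * r) -> eqmodX N p q.
Proof.
rewrite /eqmodX => r0 e.
have cop : coprimep 'X^N r.
  by apply: coprimep_expl; rewrite coprimep_sym coprimepX rootE horner_coef0.
have : 'X^N %| (p - q) * r by apply/modp_eq0P; rewrite mulrBl modpD modpN e subrr.
by rewrite (Gauss_dvdpl _ cop) => /modp_eq0P/eqP; rewrite modpD modpN subr_eq0 => /eqP.
Qed.

Lemma dvdp_Xn_exp N p : p`_0 = 0 -> 'X^N %| p ^+ N.
Proof.
move=> p0; apply: dvdp_exp2r.
by rewrite -(subr0 'X) -polyC0 dvdp_XsubCl rootE horner_coef0 p0.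
Qed.

Hypothesis charK0 : [pchar K] =i pred0.

Lemma natr_succ_neq0 k : (k.+1%:R : K) != 0.
Proof. by move/pcharf0P: charK0 => ->. Qed.

Lemma eqmodX_deriv N p q :
  eqmodX N p^`() q^`() -> p`_0 = q`_0 -> eqmodX N.+1 p q.
Proof.
move=> /eqmodX_coefP e e0; apply/eqmodX_coefP => -[_|j lt_jN]; first exact: e0.
have := e j lt_jN; rewrite !coef_deriv -(mulr_natr p`_j.+1) -(mulr_natr q`_j.+1).
exact: (mulIf (natr_succ_neq0 j)).
Qed.

Definition log1m N p : {poly K} := - \sum_(1 <= r < N.+1) (r%:R)^-1 *: p ^+ r.

Lemma deriv_log1m N p :
  p`_0 = 0 -> eqmodX N ((log1m N p)^`() * (1 - p)) (- p^`()).
Proof.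
move=> p0.
have -> : (log1m N p)^`() = - (p^`() * \sum_(i < N) p ^+ i).
  rewrite derivN raddf_sum big_add1 /= big_mkord big_distrr /=.
  congr (- _); apply: eq_bigr => i _.
  by rewrite derivZ deriv_exp -scaler_nat scalerA mulVf ?scale1r ?natr_succ_neq0.
have geom : (1 - p) * \sum_(i < N) p ^+ i = 1 - p ^+ N.
  by rewrite -opprB mulNr -subrX1 opprB.
rewrite mulNr -mulrA [_ * (1 - p)]mulrC geom mulrBr mulr1 opprB /eqmodX.
by rewrite modpD (modp_eq0 (dvdp_mull _ (dvdp_Xn_exp N _ p0))) add0r.
Qed.

End TruncatedPolynomials.

Section Taylor.
Context {K : fieldType}.
Variable D : K -> K.
Hypothesis hD : is_derivation D.

Definition taylor N a : {poly K} := \poly_(k < N) ((k`!%:R)^-1 * iter k D a).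

Lemma taylorE N a :
  taylor N a = \sum_(k < N) ((k`!%:R)^-1 * iter k D a) *: 'X^k.
Proof. exact: poly_def. Qed.

Lemma taylorD N a b : taylor N (a + b) = taylor N a + taylor N b.
Proof.
apply/polyP => k; rewrite coefD !coef_poly.
by case: ifP => _; rewrite ?addr0 // (iter_derivationD hD) mulrDr.
Qed.

Lemma taylorB N a b : taylor N (a - b) = taylor N a - taylor N b.
Proof.
apply/polyP => k; rewrite coefB !coef_poly.
by case: ifP => _; rewrite ?subr0 // (iter_derivationB hD) mulrBr.
Qed.

Lemma taylor_const N c : D c = 0 -> taylor N.+1 c = c%:P.
Proof.
move=> Dc; apply/polyP => -[|k]; rewrite coef_poly coefC.
  by rewrite /= invr1 mul1r.
by rewrite iterSr Dc (iter_derivation0 hD) mulr0 if_same.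
Qed.

Lemma taylor_coord N y : D y = 1 -> eqmodX N (taylor N y) (y%:P + 'X).
Proof.
move=> Dy; apply/eqmodX_coefP => -[|[|k]] lt_kN.
all: rewrite coef_poly lt_kN coefD coefC coefX.
- by rewrite /= invr1 mul1r addr0.
- by rewrite /= Dy invr1 mul1r add0r.
- by rewrite !iterSr Dy (derivation1 hD) (iter_derivation0 hD) mulr0 addr0.
Qed.

Lemma taylor_trunc {m N} a : (m <= N)%N -> eqmodX m (taylor N a) (taylor m a).
Proof.
move=> le_mN; apply/eqmodX_coefP => k lt_km.
by rewrite !coef_poly lt_km (leq_trans lt_km le_mN).
Qed.

Hypothesis charK0 : [pchar K] =i pred0.

Lemma deriv_taylor N a : (taylor N.+1 a)^`() = taylor N (D a).
Proof.
apply/polyP => k; rewrite coef_deriv !coef_poly ltnS.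
case: ifP => _; last by rewrite mul0rn.
rewrite -iterSr -[_ *+ k.+1]mulr_natr mulrAC; congr (_ * _).
by rewrite factS natrM invfM mulrAC mulVf ?mul1r ?natr_succ_neq0.
Qed.

Lemma taylorM N a b : eqmodX N (taylor N (a * b)) (taylor N a * taylor N b).
Proof.
elim: N a b => [|N IH] a b; first by rewrite /eqmodX expr0 !modp1.
apply: (eqmodX_deriv charK0); last by rewrite coef0M !coef_poly /= invr1 !mul1r.
rewrite deriv_taylor (derivationM hD) taylorD derivM !deriv_taylor /eqmodX !modpD.
have trunc c := taylor_trunc c (leqnSn N).
by rewrite !IH modpM [in RHS]modpM trunc [X in _ + X]modpM [X in _ = _ + X]modpM trunc.
Qed.

Lemma taylor_logderiv N g :
  g != 0 -> eqmodX N (taylor N (D g / g) * taylor N.+1 g) (taylor N.+1 g)^`().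
Proof.
move=> g0; rewrite deriv_taylor /eqmodX -[in RHS](divfK g0 (D g)) taylorM.
by rewrite modpM [in RHS]modpM (taylor_trunc _ (leqnSn N)).
Qed.

End Taylor.

Section Proposition.
Context {K : fieldType}.
Variables (D : K -> K) (s x t0 : K) (u : nat -> K).
Hypotheses (charK0 : [pchar K] =i pred0) (hD : is_derivation D).
Hypotheses (hs : D s = 0) (hx : D x = 0) (ht0 : D t0 = 1).
Hypotheses (hu : forall i, D (u i) = i.+1%:R * u i.+1) (hsu : s - u 0 != 0).
Variable n : nat.

Lemma iter_derivation_u0 k : iter k D (u 0) = k`!%:R * u k.
Proof.
elim: k => [|k IH]; first by rewrite mul1r.
by rewrite iterS IH (derivation_natrM hD) hu factS natrM -mulrA mulrCA.
Qed.

Lemma taylor_s_sub_u0 N :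
  taylor D N.+1 (s - u 0) = s%:P - \sum_(k < N.+1) u k *: 'X^k.
Proof.
rewrite (taylorB D hD) (taylor_const D hD) // -poly_def; congr (_ - _).
apply: eq_poly => k _; rewrite iter_derivation_u0 mulKf //.
by move/pcharf0P: charK0 => ->; rewrite -lt0n fact_gt0.
Qed.

Lemma eqeps_t0_sub_x_factorization :
  eqeps n ((t0 - x)%:P + 'X)
    ((\sum_(k < n.+1) (((k`!)%:R)^-1 * iter k D ((t0 - x) / (s - u 0))) *: 'X^k)
     * (s%:P - \sum_(k < n.+1) u k *: 'X^k)).
Proof.
rewrite -taylor_s_sub_u0 -taylorE /eqeps -(taylorM D hD charK0) (divfK hsu).
rewrite (taylor_coord D hD) //.
by rewrite (derivationB hD) ht0 hx subr0.
Qed.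

Lemma scale_taylor_s_sub_u0 N :
  (s - u 0)^-1 *: taylor D N.+1 (s - u 0)
  = 1 - \sum_(1 <= k < N.+1) (u k / (s - u 0)) *: 'X^k.
Proof.
apply/esym; rewrite taylor_s_sub_u0 big_ord_recl big_add1 big_mkord /= expr0 alg_polyC.
rewrite opprD addrA -polyCB scalerDr scale_polyC mulVf // polyC1 scalerN scaler_sumr.
by congr (_ - _); apply: eq_bigr => k _; rewrite scalerA mulrC.
Qed.

Lemma log1m_eps_coef m : (1 <= m <= n)%N ->
  ((m`!)%:R)^-1 * iter m.-1 D (- u 1 / (s - u 0)) = (log1m_eps n s u)`_m.
Proof.
case: m => [|m] //= lt_mn.
pose P := \sum_(1 <= k < n.+1) (u k / (s - u 0)) *: 'X^k.
have -> : log1m_eps n s u = log1m n P by [].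
have Q_eq := esym (scale_taylor_s_sub_u0 n); rewrite -/P in Q_eq.
have Q0 : (1 - P)`_0 = 1 by rewrite Q_eq coefZ coef_poly /= invr1 mul1r mulVf.
have P0 : P`_0 = 0.
  rewrite coef_sum big_nat big1 // => k /andP[k_gt0 _].
  by rewrite coefZ coefXn eq_sym eqn0Ngt k_gt0 mulr0.
have Dg : D (s - u 0) = - u 1 by rewrite (derivationB hD) hs hu mul1r sub0r.
have htaylor : eqmodX n (taylor D n (- u 1 / (s - u 0)) * (1 - P)) (- P^`()).
  rewrite Q_eq -scalerAr /eqmodX modpZl -Dg (taylor_logderiv D hD charK0 n _ hsu).
  by rewrite -modpZl -derivZ -Q_eq derivB -polyC1 derivC sub0r.
have Q0_neq0 : (1 - P)`_0 != 0 by rewrite Q0 oner_neq0.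
have hlog := deriv_log1m charK0 n _ P0.
have := eqmodX_mulr_cancel _ _ _ _ Q0_neq0 (etrans hlog (esym htaylor)).
move=> /eqmodX_coefP/(_ m lt_mn).
rewrite coef_deriv coef_poly lt_mn; set L := (log1m n P)`_m.+1 => E.
by rewrite factS natrM invfM -mulrA -E -(mulr_natl L) mulKf ?natr_succ_neq0.
Qed.

End Proposition.

Theorem proposition2p2 (K : fieldType) (charK0 : [pchar K] =i pred0)
  (D : K -> K) (hD : is_derivation D)
  (s x t0 : K) (u2 : nat -> nat -> K)
  (hs : D s = 0) (hx : D x = 0) (ht0 : D t0 = 1)
  (hu : forall i j : nat, (j <= i)%N -> D (u2 i j) = (j.+1)%:R * u2 i.+1 j.+1)
  (hsu : s - u2 0%N 0%N != 0)
  (n : nat) :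
  let u := fun i : nat => u2 i i in
  (* (a) *)
  eqeps n ((t0 - x)%:P + 'X)
    ((\sum_(k < n.+1) (((k`!)%:R)^-1 * iter k D ((t0 - x) / (s - u 0%N))) *: 'X^k)
     * (s%:P - \sum_(k < n.+1) u k *: 'X^k))
  /\
  (* (b), for 1 <= m <= n (the case m = 0 reads log(s-u_0) = log(s-u_0)) *)
  (forall m : nat, (1 <= m <= n)%N ->
     ((m`!)%:R)^-1 * iter m.-1 D (- u 1%N / (s - u 0%N))
     = (log1m_eps n s u)`_m).
Proof.
move=> u; have hu_diag i : D (u i) = i.+1%:R * u i.+1 by exact: hu.
split; first exact: eqeps_t0_sub_x_factorization.
exact: log1m_eps_coef.
Qed.
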